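(* Let $(X,f)$ be a dynamical system with a full background measure $\mu_0$, and assume $(X,f)$ satisfies TRAC 1 and TRAC 2 (with ergodic measures $\mu_1,\dots,\mu_k$). If $B$ is a visible basic set, then there exists $i$ with $|\mu_i|\subset B$; in fact $\bigcup\{Gen(\mu_i):|\mu_i|\subset B\}$ intersects the basin $G(B)$ in a dense subset of $G(B)$. In particular, if $B$ is a terminal basic set then there exists $i$ with $|\mu_i|\subset B$.
   Context: $X$ compact metric, $f$ continuous. A background measure $\mu_0$ is a complete Borel probability measure which is full, i.e. every nonempty open set has positive measure. Basic sets are the chain components of $f$ (equivalence classes of chain recurrent points under mutual reachability by $\epsilon$-chains for all $\epsilon>0$); $B$ is terminal if every point chain-reachable from a point of $B$ lies in $B$. The basin of $B$ is $G(B)=\operatorname{int}\{x:\omega f(x)\subset B\}$, where $\omega f(x)$ is the limit set of the forward orbit; $B$ is visible if $G(B)\neq\emptyset$. $Gen(\mu)$ is the set of points $x$ with $\frac1n\sum_{i<n}u(f^ix)\to\int u\,d\mu$ for all continuous $u$; $|\mu|$ is the support. TRAC 1: there are only finitely many basic sets. TRAC 2: there are finitely many ergodic invariant probability measures $\mu_1,\dots,\mu_k$ such that every point outside some $\mu_0$-null set is generic for some $\mu_i$. *)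

From HB Require Import structures.
From mathcomp Require Import all_boot all_order all_algebra.
From mathcomp Require Import all_classical all_reals all_analysis.
Set Implicit Arguments. Unset Strict Implicit. Unset Printing Implicit Defensive.
Import Order.TTheory GRing.Theory Num.Theory.
Import numFieldNormedType.Exports.
Local Open Scope classical_set_scope.
Local Open Scope ring_scope.

(** Pointed metric spaces (a metric space with a distinguished point; every
    space carrying a probability measure is nonempty, so this is harmless).
    The point is needed by the library's generated-sigma-algebra construction. *)
#[short(type="pmetricType")]
HB.structure Definition PMetric (K : numDomainType) :=
  { M of Pointed M & Metric K M }.

Section Dyn.
Context {R : realType} {X : pmetricType R}.

Definition borel := g_sigma_algebraType (@open X).

Definition eps_chain (f : X -> X) (eps : R) (x y : X) :=
  exists (n : nat) (c : nat -> X), c 0%N = x /\ c n.+1 = y /\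
    forall j, (j <= n)%N -> mdist (f (c j)) (c j.+1) < eps.

Definition chain_reach (f : X -> X) (x y : X) :=
  forall eps : R, 0 < eps -> eps_chain f eps x y.

Definition chain_recurrent (f : X -> X) (x : X) := chain_reach f x x.

Definition basic_set (f : X -> X) (B : set X) :=
  exists2 x, chain_recurrent f x &
    B = [set y | chain_reach f x y /\ chain_reach f y x].

Definition terminal (f : X -> X) (B : set X) :=
  forall x y, B x -> chain_reach f x y -> B y.

Definition omega_limit (f : X -> X) (x : X) : set X :=
  [set y | forall U, nbhs y U -> forall N : nat,
     exists2 n : nat, (N <= n)%N & U (iter n f x)].

Definition basin (f : X -> X) (B : set X) : set X :=
  interior [set x | omega_limit f x `<=` B].

Definition visible (f : X -> X) (B : set X) := basin f B !=set0.

Definition full_measure (mu : set borel -> \bar R) :=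
  forall U : set X, open U -> U !=set0 -> (0 < mu U)%E.

Definition msupport (mu : set borel -> \bar R) : set X :=
  [set x | forall U : set X, open U -> U x -> (0 < mu U)%E].

Definition invariant_measure (f : X -> X) (mu : set borel -> \bar R) :=
  forall A : set borel, measurable A -> mu (f @^-1` A) = mu A.

Definition ergodic_measure (f : X -> X) (mu : set borel -> \bar R) :=
  forall A : set borel, measurable A -> f @^-1` A = A ->
    mu A = 0%E \/ mu A = 1%E.

Definition generic_points (f : X -> X) (mu : {measure set borel -> \bar R})
  : set X :=
  [set x | forall u : X -> R, continuous u ->
     (fun n : nat => ((n%:R)^-1 * \sum_(i < n) u (iter i f x))%:E)
       @ \oo --> (\int[mu]_(y in [set: borel]) (u y)%:E)%E].

Definition TRAC1 (f : X -> X) := finite_set [set B | basic_set f B].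

End Dyn.

From HB Require Import structures.
From mathcomp Require Import all_boot all_order all_algebra.
From mathcomp Require Import all_classical all_reals all_analysis.
From mathcomp Require Import measurable_realfun zify lra.
Import Order.TTheory GRing.Theory Num.Theory.
Import numFieldNormedType.Exports.
Set Implicit Arguments. Unset Strict Implicit. Unset Printing Implicit Defensive.
Local Open Scope classical_set_scope.
Local Open Scope ring_scope.

(* Let x lie in the basin G(B) and W be a neighbourhood of x.  Since mu0 is
   full and the non-generic points are mu0-null, the open set int W ∩ G(B)
   contains a point y generic for some mu_i.  Birkhoff averages at y of a bump
   function centred at a point of |mu_i| converge to a positive integral, so the
   orbit of y visits every neighbourhood of |mu_i| infinitely often:
   |mu_i| ⊆ ω(y) ⊆ B.  A terminal basic set B is visible: by TRAC 1 there is
   e > 0 such that every chain recurrent point e-chain reachable from a point b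
   of B is chain reachable from b, hence lies in B by terminality; the open set
   of points e/2-chain reachable from b is forward invariant and contains f b,
   and the ω-limit set of each of its points consists of chain recurrent points
   e-chain reachable from b. *)

Section EpsChains.
Context {R : realType} {X : pmetricType R} (f : X -> X).
Implicit Types (e d : R) (x y z w : X).

Lemma eps_chain_le e d x y : e <= d -> eps_chain f e x y -> eps_chain f d x y.
Proof.
move=> le_ed [n [c [c0 [cn steps]]]]; exists n, c; do 2!split => //.
move=> j jn; exact: lt_le_trans (steps j jn) le_ed.
Qed.

Lemma eps_chain_step e x y : mdist (f x) y < e -> eps_chain f e x y.
Proof.
move=> fxy; exists 0%N, (fun j => if j is 0%N then x else y).
by do 2!split => //; case.
Qed.

Lemma eps_chain_trans e x y z :
  eps_chain f e x y -> eps_chain f e y z -> eps_chain f e x z.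
Proof.
move=> [n1 [c1 [c10 [c1n H1]]]] [n2 [c2 [c20 [c2n H2]]]].
exists (n1 + n2).+1, (fun j => if (j <= n1.+1)%N then c1 j else c2 (j - n1.+1)%N).
split => //; split.
  have -> : ((n1 + n2).+2 <= n1.+1)%N = false by lia.
  by have -> : ((n1 + n2).+2 - n1.+1 = n2.+1)%N by lia.
move=> j jn; have [jle|jgt] := leqP j n1.
  have -> : (j <= n1.+1)%N = true by lia.
  have -> : (j.+1 <= n1.+1)%N = true by lia.
  exact: H1.
have -> : (j.+1 <= n1.+1)%N = false by lia.
have -> : (j.+1 - n1.+1 = (j - n1.+1).+1)%N by lia.
have [jn1|jn1] := eqVneq j n1.+1.
  by rewrite jn1 leqnn subnn c1n -c20; apply: H2.
have -> : (j <= n1.+1)%N = false by lia.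
by apply: H2; lia.
Qed.

Lemma eps_chain_last e x y : eps_chain f e x y ->
  exists2 z, z = x \/ eps_chain f e x z & mdist (f z) y < e.
Proof.
move=> [[|n] [c [c0 [cn H]]]].
  by exists x; [left|rewrite -{1}c0 -cn; apply: H].
exists (c n.+1); last by rewrite -cn; apply: H.
by right; exists n, c; do 2!split => //; move=> j jn; apply: H; lia.
Qed.

Lemma eps_chain_snoc e x y z :
  z = x \/ eps_chain f e x z -> mdist (f z) y < e -> eps_chain f e x y.
Proof.
move=> [->|xz] fzy; first exact: eps_chain_step.
exact: eps_chain_trans xz (eps_chain_step fzy).
Qed.

Lemma eps_chain_moveR e d x y w :
  eps_chain f e x y -> mdist y w < d -> eps_chain f (e + d) x w.
Proof.
move=> /eps_chain_last [z xz fzy] yw.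
have d0 : 0 <= d by exact/ltW/(le_lt_trans (mdist_ge0 _ _) yw).
apply: (@eps_chain_snoc _ _ _ z).
  by case: xz => [|xz]; [left|right; apply: eps_chain_le xz; lra].
by rewrite (le_lt_trans (metric_triangle _ y _)) // ltrD.
Qed.

Lemma open_eps_chain e x : open [set y | eps_chain f e x y].
Proof.
rewrite openE => y /eps_chain_last [z xz fzy].
apply/nbhs_ballP; exists (e - mdist (f z) y); first by rewrite /= subr_gt0.
move=> y'; rewrite ballEmdist /= => yy'; apply: eps_chain_snoc xz _.
by rewrite (le_lt_trans (metric_triangle _ y _)) // -ltrBrDl.
Qed.

Lemma eps_chain_iter e x y n :
  0 < e -> eps_chain f e x y -> eps_chain f e x (iter n f y).
Proof.
move=> e0 xy; elim: n => [|n IH] //=.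
by apply: eps_chain_trans IH (eps_chain_step _); rewrite mdistxx.
Qed.

Lemma chain_reach_trans x y z :
  chain_reach f x y -> chain_reach f y z -> chain_reach f x z.
Proof. by move=> xy yz e e0; exact: eps_chain_trans (xy e e0) (yz e e0). Qed.

Lemma basic_set_reach B y z : basic_set f B -> B y -> B z -> chain_reach f y z.
Proof. by move=> [x _ ->] [_ yx] [xz _]; exact: chain_reach_trans yx xz. Qed.

Lemma omega_limit_chain_recurrent x w :
  continuous f -> omega_limit f x w -> chain_recurrent f w.
Proof.
move=> cf wx e e0; have e20 : 0 < e / 2 by rewrite divr_gt0.
have /metricType_numDomainType.cvgrPdist_lt /(_ _ e20) := cf w.
case/nbhs_ballP => del del0 fw_close.
have r0 : 0 < Num.min del (e / 2) by rewrite lt_min del0 e20.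
have bw : nbhs w (ball w (Num.min del (e / 2))) by exact: nbhsx_ballx.
have [n _ wn] := wx _ bw 0%N; have [m nm wm] := wx _ bw n.+1.
have wfn : eps_chain f (e / 2) w (iter n.+1 f x).
  apply/eps_chain_step; rewrite iterS; apply: fw_close.
  by apply: le_ball wn; rewrite ge_min lexx.
have wm' : mdist (iter m f x) w < e / 2.
  rewrite metric_sym; move: wm; rewrite ballEmdist /= => /lt_le_trans; apply.
  by rewrite ge_min lexx orbT.
have := eps_chain_iter (m - n.+1) e20 wfn.
by rewrite -iterD subnK // => /eps_chain_moveR /(_ wm'); rewrite -splitr.
Qed.

End EpsChains.

Section TerminalVisible.
Context {R : realType} {X : pmetricType R} (f : X -> X).

Lemma near0_eps_chain_reach a B : basic_set f B ->
  \forall e \near (0 : R)^'+,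
    forall w, B w -> eps_chain f e a w -> chain_reach f a w.
Proof.
(* Otherwise some point of B is not e0-reachable from a; as B is internally
   chain transitive, no point of B is then e-reachable for e <= e0. *)
move=> bB; have [reach|] := pselect (forall z, B z -> chain_reach f a z).
  by apply: nearW => e w Bw _; exact: reach.
move=> /existsNP [z /not_implyP [Bz /existsNP [e0 /not_implyP [e00 not_az]]]].
near=> e => w Bw aw; exfalso; apply: not_az.
have /eps_chain_le : e <= e0 by near: e; exact: nbhs_right_ltW.
apply; apply: eps_chain_trans aw _.
apply: (basic_set_reach bB Bw Bz); near: e; exact: nbhs_right_gt.
Unshelve. all: by end_near.
Qed.

Lemma eps_chain_reach_uniform a : TRAC1 f ->
  exists2 e : R, 0 < e &
    forall w, chain_recurrent f w -> eps_chain f e a w -> chain_reach f a w.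
Proof.
move=> fin.
have : \forall e \near (0 : R)^'+, 0 < e /\ forall B, basic_set f B ->
    forall w, B w -> eps_chain f e a w -> chain_reach f a w.
  apply: filterI; first exact: nbhs_right_gt.
  apply: filterS (filter_bigI (D := fset_set [set B | basic_set f B]) _ _).
    move=> e He B bB; apply: (He B) => //.
    by rewrite /= in_fset_set // inE.
  by move=> B; rewrite in_fset_set // inE; exact: near0_eps_chain_reach.
move=> near_e; have [e [e0 He]] := filter_ex near_e; exists e => // w wrec.
apply: (He [set y | chain_reach f w y /\ chain_reach f y w]) => //.
by exists w.
Qed.

Lemma terminal_visible B :
  continuous f -> TRAC1 f -> basic_set f B -> terminal f B -> visible f B.
Proof.
move=> cf fin bB tB; have [b brec eB] := bB.
have Bb : B b by rewrite eB.
have [e e0 reach] := eps_chain_reach_uniform b fin.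
have e20 : 0 < e / 2 by rewrite divr_gt0.
pose U := [set y | eps_chain f (e / 2) b y].
have UB : U `<=` [set x | omega_limit f x `<=` B].
  move=> x bx w wx; apply: (tB b) => //.
  apply: reach; first exact: omega_limit_chain_recurrent cf wx.
  have [n _] := wx _ (nbhsx_ballx w _ e20) 0%N.
  rewrite ballEmdist /= metric_sym => nw.
  by have := eps_chain_moveR (eps_chain_iter n e20 bx) nw; rewrite -splitr.
exists (f b); apply: filterS UB _; apply: open_nbhs_nbhs; split.
  exact: open_eps_chain.
by apply: eps_chain_step; rewrite mdistxx.
Qed.

End TerminalVisible.

Lemma cvg_mean0 {R : realType} (a : R ^nat) : a @ \oo --> 0 ->
  (fun n => n%:R^-1 * \sum_(i < n) a i) @ \oo --> 0.
Proof.
move=> /cesaro a0; rewrite -cvg_shiftS; apply: cvg_trans a0; apply: near_eq_cvg.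
by apply: nearW => n; rewrite /arithmetic_mean /series /= big_mkord.
Qed.

Section GenericPoints.
Context {R : realType} {X : pmetricType R}.
Implicit Types (mu : {measure set (@borel R X) -> \bar R}) (z y : X) (r : R).

Lemma continuous_measurable_borel (u : X -> R) :
  continuous u -> measurable_fun [set: @borel R X] u.
Proof.
move=> /continuousP cu.
apply: (measurability _ (RGenOpens.measurableE R)).
move=> _ [_ [a [b ->] <-]]; apply: measurableI => //.
by apply: sub_sigma_algebra; apply: cu; exact: interval_open.
Qed.

Lemma continuous_mdist z : continuous (mdist z).
Proof.
move=> y; apply/cvgrPdist_lt => e e0; apply/nbhs_ballP; exists e => // y'.
rewrite ballEmdist /=; apply: le_lt_trans; rewrite ler_norml.
have := metric_triangle z y y'; have := metric_triangle z y' y.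
by rewrite (metric_sym y' y) => ? ?; apply/andP; split; lra.
Qed.

Definition bump z r y : R := Num.max 0 (r - mdist z y).

Lemma continuous_bump z r : continuous (bump z r).
Proof.
move=> y; apply: (@continuous_max _ _ (cst 0) (fun y => r - mdist z y)).
  exact: cst_continuous.
by apply: continuousB; [exact: cst_continuous|exact: continuous_mdist].
Qed.

Lemma bump_ge0 z r y : 0 <= bump z r y.
Proof. by rewrite /bump le_max lexx. Qed.

Lemma bump_eq0 z r y : ~ ball z r y -> bump z r y = 0.
Proof.
rewrite ballEmdist /= => /negP; rewrite -leNgt => rz.
by rewrite /bump max_l // subr_le0.
Qed.

Lemma integral_bump_gt0 mu z r : msupport mu z -> 0 < r ->
  (0 < \int[mu]_(y in [set: @borel R X]) (bump z r y)%:E)%E.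
Proof.
move=> zmu r0; have r20 : 0 < r / 2 by rewrite divr_gt0.
pose E := interior (ball z (r / 2)).
have mE : measurable (E : set (@borel R X)).
  by apply: sub_sigma_algebra; exact: open_interior.
have muE : (0 < mu E)%E by apply: zmu; [exact: open_interior|exact: nbhsx_ballx].
apply: (@lt_le_trans _ _ ((r / 2)%:E * mu E)%E); first by rewrite mule_gt0.
rewrite -[X in mu X]setIT -(integral_indic _ measurableT mE).
rewrite -(@integralZl_indic _ _ _ mu _ measurableT (fun=> E) (r / 2)) //; last first.
  by rewrite ltNge (ltW r20).
apply: ge0_le_integral => //.
- by move=> y _; rewrite lee_fin mulr_ge0 // ?ltW.
- by apply/measurable_EFinP; apply: measurable_funM => //; exact: measurable_indic.
- by apply/measurable_EFinP; apply: continuous_measurable_borel; exact: continuous_bump.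
move=> y _; rewrite lee_fin indicE; have [yE|nyE] := pselect (E y).
  rewrite mem_set //= mulr1 /bump le_max; apply/orP; right.
  by move/interior_subset: yE; rewrite ballEmdist /=; lra.
by rewrite memNset // mulr0 bump_ge0.
Qed.

Lemma generic_msupport_sub_omega (f : X -> X) mu x :
  generic_points f mu x -> msupport mu `<=` omega_limit f x.
Proof.
move=> gx z zmu U zU N; apply: contrapT => avoid.
case/nbhs_ballP: zU => r r0 rU.
have orbit_off : \forall n \near \oo, bump z r (iter n f x) = 0.
  by exists N => // n Nn; apply: bump_eq0 => /rU Un; apply: avoid; exists n.
have avg0 : (fun n : nat =>
    (n%:R^-1 * \sum_(i < n) bump z r (iter i f x))%:E) @ \oo --> 0%:E.
  apply: cvg_EFin; first exact: nearW.
  by apply: (cvg_mean0 (a := fun n => bump z r (iter n f x))); exact: cvg_near_cst.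
have := cvg_unique (@ereal_hausdorff R) (gx _ (@continuous_bump z r)) avg0.
have := integral_bump_gt0 zmu r0.
by move=> /[swap] ->; rewrite ltxx.
Qed.

End GenericPoints.

Section Basins.
Context {R : realType} {X : pmetricType R} (f : X -> X).

Lemma full_measure_dense (mu : {measure set (@borel R X) -> \bar R}) (N : set X) :
  full_measure mu -> mu.-negligible N -> dense (~` N).
Proof.
move=> full [A [mA A0 NA]] O O0 oO; apply: contrapT => ON.
have OA : O `<=` A.
  by move=> x Ox; apply: NA; apply: contrapT => Nx; apply: ON; exists x.
have mO : measurable (O : set (@borel R X)) by exact: sub_sigma_algebra.
have : (mu O <= 0)%E.
  by rewrite -A0; exact: (le_measure mu (mem_set mO) (mem_set mA) OA).
by rewrite leNgt full.
Qed.

Lemma basin_generic_msupport_sub (mu : {measure set (@borel R X) -> \bar R}) B y :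
  basin f B y -> generic_points f mu y -> msupport mu `<=` B.
Proof.
by move=> /interior_subset yB gy z /(generic_msupport_sub_omega gy); exact: yB.
Qed.

Lemma basin_sub_closure_generic (mu0 : {measure set (@borel R X) -> \bar R})
    (I : Type) (mu : I -> {measure set (@borel R X) -> \bar R}) B :
  full_measure mu0 ->
  mu0.-negligible (~` \bigcup_(i in [set: I]) generic_points f (mu i)) ->
  basin f B `<=`
    closure (basin f B `&`
      \bigcup_(i in [set i | msupport (mu i) `<=` B]) generic_points f (mu i)).
Proof.
move=> full negl x bx W xW.
have WB0 : interior W `&` basin f B !=set0 by exists x.
have oWB : open (interior W `&` basin f B) by apply: openI; exact: open_interior.
have := full_measure_dense full negl WB0 oWB.
rewrite setCK => -[y [[/interior_subset Wy basin_y] [i _ gy]]].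
exists y; split => //; split => //; exists i => //.
exact: basin_generic_msupport_sub basin_y gy.
Qed.

End Basins.

Theorem lemma2p5 (R : realType) (X : pmetricType R) (f : X -> X)
  (mu0 : probability (@borel R X) R)
  (k : nat) (mu : 'I_k -> probability (@borel R X) R) :
  compact [set: X] ->
  continuous f ->
  full_measure mu0 ->
  TRAC1 f ->
  (forall i, invariant_measure f (mu i) /\ ergodic_measure f (mu i)) ->
  mu0.-negligible (~` \bigcup_(i in [set: 'I_k]) generic_points f (mu i)) ->
  (forall B : set X, basic_set f B -> visible f B ->
     (exists i, msupport (mu i) `<=` B) /\
     basin f B `<=`
       closure (basin f B `&`
         \bigcup_(i in [set i | msupport (mu i) `<=` B]) generic_points f (mu i)))
  /\
  (forall B : set X, basic_set f B -> terminal f B ->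
     exists i, msupport (mu i) `<=` B).
Proof.
move=> _ cf full fin _ negl.
have dense_generic B := basin_sub_closure_generic (B := B) full negl.
have visible_support B : visible f B -> exists i, msupport (mu i) `<=` B.
  move=> [x bx]; have [y [[_ [i Bi _]] _]] := dense_generic B x bx _ filterT.
  by exists i.
split=> B bB => [vB|tB].
  by split; [exact: visible_support|exact: dense_generic].
by apply: visible_support; exact: terminal_visible.
Qed.
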